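(* (i) A diagonal matrix $D=\mathrm{diag}(z_1,z_2,z_3,z_4)\in U(4)$ can be written as $D=D_1\otimes D_2$ with $D_1,D_2$ diagonal elements of $U(2)$ if and only if $z_1z_2^{-1}z_3^{-1}z_4=1$. (ii) Every $4\times 4$ unitary matrix that is diagonal in the computational basis can be implemented, up to a global phase, by a circuit of at most five elementary gates.
   Context: The computational basis of $\mathbb{C}^2\otimes\mathbb{C}^2$ is $|00\rangle,|01\rangle,|10\rangle,|11\rangle$ in this order, and $\otimes$ is the Kronecker product. The elementary gates are the $4\times 4$ matrices of the following forms: $R_y(\theta)\otimes \mathbf{1}$ or $\mathbf{1}\otimes R_y(\theta)$, where $R_y(\theta)=\begin{pmatrix}\cos\theta/2 & \sin\theta/2\\ -\sin\theta/2 & \cos\theta/2\end{pmatrix}$; $R_z(\alpha)\otimes\mathbf{1}$ or $\mathbf{1}\otimes R_z(\alpha)$, where $R_z(\alpha)=\mathrm{diag}(e^{-i\alpha/2},e^{i\alpha/2})$ ($\theta,\alpha$ real); and the two CNOT gates, namely the permutation matrix swapping $|10\rangle\leftrightarrow|11\rangle$ and the permutation matrix swapping $|01\rangle\leftrightarrow|11\rangle$. A circuit computes the product of its gate matrices; implementing $U$ up to global phase means the product equals $cU$ for some $|c|=1$. *)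

From mathcomp Require Import all_boot all_order all_algebra.
From mathcomp Require Import reals trigo.
From mathcomp Require Import complex mxtens.
Set Implicit Arguments. Unset Strict Implicit. Unset Printing Implicit Defensive.
Import Order.TTheory GRing.Theory Num.Theory.
Local Open Scope ring_scope.
Local Open Scope complex_scope.

Definition adjmx (R : realType) (m n : nat) (A : 'M[R[i]]_(m, n)) : 'M[R[i]]_(n, m) :=
  (map_mx (@conjc R) A)^T.
Definition unitary_mx (R : realType) (n : nat) (U : 'M[R[i]]_n) : Prop :=
  U *m adjmx U = 1%:M.

(* Kronecker product of 2x2 matrices: basis |00>,|01>,|10>,|11> = 0,1,2,3,
   index of |ab> is 2a+b (mxtens convention). *)
Definition kron2 (R : realType) (A B : 'M[R[i]]_2) : 'M[R[i]]_4 := tensmx A B.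

Definition Ry (R : realType) (theta : R) : 'M[R[i]]_2 :=
  \matrix_(i < 2, j < 2)
    (if (i == 0) && (j == 0) then (cos (theta / 2))%:C
     else if (i == 0) && (j == 1) then (sin (theta / 2))%:C
     else if (i == 1) && (j == 0) then (- sin (theta / 2))%:C
     else (cos (theta / 2))%:C).

Definition expi (R : realType) (t : R) : R[i] := (cos t +i* sin t)%C.

Definition Rz (R : realType) (alpha : R) : 'M[R[i]]_2 :=
  \matrix_(i < 2, j < 2)
    (if i != j then 0
     else if i == 0 then expi (- alpha / 2) else expi (alpha / 2)).

Definition perm4 (R : realType) (f : 'I_4 -> 'I_4) : 'M[R[i]]_4 :=
  \matrix_(i < 4, j < 4) (if f j == i then 1 else 0).

(* swap |10> <-> |11>, i.e. indices 2 <-> 3 *)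
Definition cnot12 (R : realType) : 'M[R[i]]_4 :=
  perm4 R (fun k : 'I_4 => if k == 2%:R then 3%:R else if k == 3%:R then 2%:R else k).
(* swap |01> <-> |11>, i.e. indices 1 <-> 3 *)
Definition cnot21 (R : realType) : 'M[R[i]]_4 :=
  perm4 R (fun k : 'I_4 => if k == 1%:R then 3%:R else if k == 3%:R then 1%:R else k).

Inductive gate (R : realType) : Type :=
| RyL of R
| RyR of R
| RzL of R
| RzR of R
| CNOT12
| CNOT21.

Definition gate_mx (R : realType) (g : gate R) : 'M[R[i]]_4 :=
  match g with
  | RyL t => kron2 (Ry t) 1%:M
  | RyR t => kron2 1%:M (Ry t)
  | RzL a => kron2 (Rz a) 1%:M
  | RzR a => kron2 1%:M (Rz a)
  | CNOT12 => cnot12 R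
  | CNOT21 => cnot21 R
  end.

Definition circuit_mx (R : realType) (c : seq (gate R)) : 'M[R[i]]_4 :=
  foldr (fun g M => gate_mx g *m M) 1%:M c.

Definition implements_up_to_phase (R : realType) (c : seq (gate R)) (U : 'M[R[i]]_4) : Prop :=
  exists ph : R[i], `|ph| = 1 /\ circuit_mx c = ph *: U.

(* (i) The diagonal of D1 (x) D2 is (a0 b0, a0 b1, a1 b0, a1 b1), whence z0 z3 = z1 z2;
   conversely, when z0 z3 = z1 z2, D1 = diag(1, z2/z0) and D2 = diag(z0, z1) work.
   (ii) Rz(a) (x) 1, 1 (x) Rz(b) and its conjugate by the CNOT swapping |10>, |11>
   are diagonal with phase vectors (-a,-a,a,a)/2, (-b,b,-b,b)/2 and (-c,c,c,-c)/2.
   These span the phase vectors with zero sum, and the global phase supplies the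
   remaining direction, so five gates reach every diagonal unitary. *)

From mathcomp Require Import all_boot all_order all_algebra.
From mathcomp Require Import reals trigo.
From mathcomp Require Import complex mxtens.
From mathcomp Require Import ring lra.
Set Implicit Arguments. Unset Strict Implicit. Unset Printing Implicit Defensive.
Import Order.TTheory GRing.Theory Num.Theory.
Local Open Scope ring_scope.

Ltac case_ord4 i := case: i => [[|[|[|[|?]]]] ?] //.

Section Diag4.
Variable V : pzRingType.

Definition diag4 (x0 x1 x2 x3 : V) : 'M[V]_4 :=
  diag_mx (\row_(k < 4) [:: x0; x1; x2; x3]`_k).

Lemma diag_mx4E (z : 'rV[V]_4) : diag_mx z = diag4 (z 0 0) (z 0 1) (z 0 2) (z 0 3).
Proof.
by congr diag_mx; apply/rowP => k; rewrite mxE; case_ord4 k; congr (z 0 _); apply: val_inj.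
Qed.

Lemma mul_diag4 x0 x1 x2 x3 y0 y1 y2 y3 :
  diag4 x0 x1 x2 x3 *m diag4 y0 y1 y2 y3 = diag4 (x0 * y0) (x1 * y1) (x2 * y2) (x3 * y3).
Proof. by rewrite mulmx_diag; congr diag_mx; apply/rowP => k; rewrite !mxE; case_ord4 k. Qed.

Lemma scale_diag4 c x0 x1 x2 x3 :
  c *: diag4 x0 x1 x2 x3 = diag4 (c * x0) (c * x1) (c * x2) (c * x3).
Proof.
apply/matrixP => i j; rewrite !mxE.
by case_ord4 i; case_ord4 j; rewrite /= ?mulr0n ?mulr0 ?mulr1n.
Qed.

Lemma diag4_inj x0 x1 x2 x3 y0 y1 y2 y3 :
  diag4 x0 x1 x2 x3 = diag4 y0 y1 y2 y3 -> [/\ x0 = y0, x1 = y1, x2 = y2 & x3 = y3].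
Proof.
move/matrixP=> e.
by split; [move: (e 0 0) | move: (e 1 1) | move: (e 2 2) | move: (e 3 3)]; rewrite !mxE.
Qed.

End Diag4.

Section TwoQubits.
Variable R : realType.
Local Notation C := R[i].

Lemma kron2_diag (a b : 'rV[C]_2) :
  kron2 (diag_mx a) (diag_mx b) =
  diag4 (a 0 0 * b 0 0) (a 0 0 * b 0 1) (a 0 1 * b 0 0) (a 0 1 * b 0 1).
Proof.
apply/matrixP => i j; rewrite /kron2 !mxE.
case_ord4 i; case_ord4 j; rewrite /= ?mxE /= ?mulr1n ?mulr0n ?mulr0 ?mul0r //.
all: by congr (a 0 _ * b 0 _); apply: val_inj.
Qed.

Lemma adjmx_diag n (d : 'rV[C]_n) : adjmx (diag_mx d) = diag_mx (map_mx conjc d).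
Proof.
apply/matrixP => i j; rewrite /adjmx !mxE eq_sym.
by case: eqP => [->|_]; rewrite ?mulr1n ?mulr0n ?conjc0.
Qed.

Lemma unitary_diag_mxP n (d : 'rV[C]_n) :
  unitary_mx (diag_mx d) <-> forall k, `|d 0 k| = 1.
Proof.
have normE k : (`|d 0 k| == 1) = (d 0 k * conjc (d 0 k) == 1).
  by rewrite -normCK sqrp_eq1.
rewrite /unitary_mx adjmx_diag mulmx_diag; split.
  move/matrixP => e k; apply/eqP; rewrite normE.
  by move: (e k k); rewrite !mxE eqxx !mulr1n => ->.
move=> u; apply/matrixP => i j; rewrite !mxE; case: eqP => [->|_]; last by rewrite mulr0n.
by rewrite mulr1n; apply/eqP; rewrite -normE u.
Qed.

Local Open Scope complex_scope.

Lemma expiD (s t : R) : expi (s + t) = expi s * expi t.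
Proof. by rewrite /expi cosD sinD /=; congr (_ +i* _); ring. Qed.

Lemma norm_expi (t : R) : `|expi t| = 1.
Proof. by rewrite normc_def /= cos2Dsin2 sqrtr1. Qed.

Lemma norm_eq1_expi (u : C) : `|u| = 1 -> exists t, u = expi t.
Proof.
move/eqP; rewrite -(sqrp_eq1 (normr_ge0 u)) normCK.
case: u => a b /= /eqP[ab1 _].
have {}ab1 : a ^+ 2 + b ^+ 2 = 1 by rewrite -ab1; ring.
have a_itv : -1 <= a <= 1 by apply/andP; split; nra.
have sin_acos_a : sin (acos a) = `|b|.
  by rewrite sin_acos // -ab1 addrC addKr sqrtr_sqr.
have [b_ge0|b_lt0] := lerP 0 b.
  by exists (acos a); rewrite /expi sin_acos_a acosK // ger0_norm.
by exists (- acos a); rewrite /expi cosN sinN sin_acos_a acosK // ltr0_norm // opprK.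
Qed.

Local Close Scope complex_scope.

Lemma Rz_diag (a : R) :
  Rz a = diag_mx (\row_(k < 2) [:: expi (- a / 2); expi (a / 2)]`_k).
Proof.
by apply/matrixP => i j; rewrite !mxE; case: i => [[|[|?]] ?]; case: j => [[|[|?]] ?].
Qed.

Lemma RzL_diag4 (a : R) : gate_mx (RzL a) =
  diag4 (expi (- a / 2)) (expi (- a / 2)) (expi (a / 2)) (expi (a / 2)).
Proof. by rewrite /= Rz_diag -diag_const_mx kron2_diag !mxE /= !mulr1. Qed.

Lemma RzR_diag4 (a : R) : gate_mx (RzR a) =
  diag4 (expi (- a / 2)) (expi (a / 2)) (expi (- a / 2)) (expi (a / 2)).
Proof. by rewrite /= Rz_diag -diag_const_mx kron2_diag !mxE /= !mul1r. Qed.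

Lemma cnot12_conj_diag4 (x0 x1 x2 x3 : C) :
  cnot12 R *m diag4 x0 x1 x2 x3 *m cnot12 R = diag4 x0 x1 x3 x2.
Proof.
apply/matrixP => i j; rewrite mul_mx_diag !mxE !big_ord_recl big_ord0 !mxE.
by case_ord4 i; case_ord4 j; rewrite /= ?mulr0 ?mul0r ?mulr1 ?mul1r ?addr0 ?add0r.
Qed.

Lemma kron2_diag_cross_ratio (z : 'rV[C]_4) (a b : 'rV[C]_2) :
  diag_mx z = kron2 (diag_mx a) (diag_mx b) -> z 0 1 != 0 -> z 0 2 != 0 ->
  z 0 0 * (z 0 1)^-1 * (z 0 2)^-1 * z 0 3 = 1.
Proof.
rewrite diag_mx4E kron2_diag => /diag4_inj[-> -> -> ->].
rewrite !mulf_eq0 !negb_or => /andP[a0 b1] /andP[a1 b0].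
by field; rewrite a0 b1 a1 b0.
Qed.

Lemma cross_ratio_kron2_diag (z : 'rV[C]_4) :
  z 0 0 != 0 -> z 0 1 != 0 -> z 0 2 != 0 ->
  z 0 0 * (z 0 1)^-1 * (z 0 2)^-1 * z 0 3 = 1 ->
  diag_mx z = kron2 (diag_mx (\row_(k < 2) [:: 1; z 0 2 / z 0 0]`_k))
                    (diag_mx (\row_(k < 2) [:: z 0 0; z 0 1]`_k)).
Proof.
move=> z0 z1 z2 cr; rewrite diag_mx4E kron2_diag !mxE /= !mul1r.
congr diag4; first by rewrite divfK.
by rewrite -[RHS]mulr1 -cr; field; rewrite z0 z1 z2.
Qed.

Lemma unitary_diag_kron2P (z : 'rV[C]_4) :
  unitary_mx (diag_mx z) ->
  (exists D1 D2 : 'M[C]_2,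
      is_diag_mx D1 /\ unitary_mx D1 /\ is_diag_mx D2 /\ unitary_mx D2 /\
      diag_mx z = kron2 D1 D2)
  <-> z 0 0 * (z 0 1)^-1 * (z 0 2)^-1 * z 0 3 = 1.
Proof.
move/unitary_diag_mxP => z_norm1.
have z_neq0 k : z 0 k != 0 by rewrite -normr_eq0 z_norm1 oner_neq0.
split=> [[_ [_ [/diag_mxP[a ->] [_ [/diag_mxP[b ->] [_ zE]]]]]] | cr].
  exact: kron2_diag_cross_ratio zE (z_neq0 1) (z_neq0 2).
exists (diag_mx (\row_(k < 2) [:: 1; z 0 2 / z 0 0]`_k)).
exists (diag_mx (\row_(k < 2) [:: z 0 0; z 0 1]`_k)).
do !split; try exact: diag_mx_is_diag.
- apply/unitary_diag_mxP => k; rewrite mxE.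
  by case: k => [[|[|?]] ?] //=; rewrite ?normr1 // normf_div !z_norm1 divr1.
- by apply/unitary_diag_mxP => k; rewrite mxE; case: k => [[|[|?]] ?] //=.
- exact: cross_ratio_kron2_diag.
Qed.

Lemma circuit_mx_cons (g : gate R) (c : seq (gate R)) :
  circuit_mx (g :: c) = gate_mx g *m circuit_mx c.
Proof. by []. Qed.

Definition diag_phase_circuit (a b c : R) : seq (gate R) :=
  [:: RzL a; RzR b; CNOT12 R; RzR c; CNOT12 R].

Lemma diag_phase_circuitE (a b c : R) :
  circuit_mx (diag_phase_circuit a b c) =
  diag4 (expi (- (a + b + c) / 2)) (expi ((- a + b + c) / 2))
        (expi ((a - b + c) / 2)) (expi ((a + b - c) / 2)).
Proof.
rewrite !circuit_mx_cons mulmx1 RzL_diag4 !RzR_diag4 (mulmxA (gate_mx _)).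
rewrite cnot12_conj_diag4 !mul_diag4.
by congr diag4; rewrite -!expiD; congr expi; lra.
Qed.

Lemma diag_unitary_implementable (U : 'M[C]_4) :
  unitary_mx U -> is_diag_mx U ->
  exists c : seq (gate R), (size c <= 5)%N /\ implements_up_to_phase c U.
Proof.
move=> uU /diag_mxP[z Uz]; move: uU; rewrite Uz => /unitary_diag_mxP z_norm1.
have [p0 z0] := norm_eq1_expi (z_norm1 0); have [p1 z1] := norm_eq1_expi (z_norm1 1).
have [p2 z2] := norm_eq1_expi (z_norm1 2); have [p3 z3] := norm_eq1_expi (z_norm1 3).
(* the rotation angles and global phase solve the linear system p_k + delta = theta_k
   for the phases theta_k of diag_phase_circuitE *)
exists (diag_phase_circuit ((p2 + p3 - p0 - p1) / 2) ((p1 + p3 - p0 - p2) / 2)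
                           ((p1 + p2 - p0 - p3) / 2)).
split=> //; exists (expi (- (p0 + p1 + p2 + p3) / 4)); split; first exact: norm_expi.
rewrite diag_phase_circuitE diag_mx4E z0 z1 z2 z3 scale_diag4 -!expiD.
by congr diag4; congr expi; lra.
Qed.

End TwoQubits.

Theorem proposition1 (R : realType) :
  (forall z : 'rV[R[i]]_4,
      unitary_mx (diag_mx z) ->
      ((exists D1 D2 : 'M[R[i]]_2,
           is_diag_mx D1 /\ unitary_mx D1 /\ is_diag_mx D2 /\ unitary_mx D2 /\
           diag_mx z = kron2 D1 D2)
       <-> z 0 0 * (z 0 1)^-1 * (z 0 2)^-1 * z 0 3 = 1)) /\
  (forall U : 'M[R[i]]_4,
      unitary_mx U -> is_diag_mx U ->
      exists c : seq (gate R), (size c <= 5)%N /\ implements_up_to_phase c U).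
Proof. by split; [exact: unitary_diag_kron2P | exact: diag_unitary_implementable]. Qed.
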